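(* Let $n\geq 1$. For a Tamari interval $[S,T]$ of size $n$, define $\psi([S,T])=(c_1,\dots,c_{n-1})$ by $c_i=r_S(i)-\ell_T(i+1)$ for $i\in[n-1]$, where $r_S(i)$ is the number of nodes in the right subtree of node $i$ of $S$ and $\ell_T(j)$ is the number of nodes in the left subtree of node $j$ of $T$. Then $\psi$ takes values in $\mathcal{CC}_n$ and is an isomorphism of posets from $(\mathcal{TI}_n,\leq_{\mathrm{ti}})$ to $(\mathcal{CC}_n,\leq_{\mathrm{cc}})$.
   Context: Binary trees with $n$ nodes have their nodes labeled $1,\dots,n$ in in-order (left subtree, root, right subtree). A right rotation replaces a subtree of the form $((A,x,B),y,C)$ by $(A,x,(B,y,C))$. The Tamari order: $S\leq_{\mathrm t}T$ iff $T$ is obtained from $S$ by a finite sequence of right rotations. $\mathcal{TI}_n$ is the set of Tamari intervals $[S,T]$, i.e. pairs of binary trees with $n$ nodes with $S\leq_{\mathrm t}T$, ordered by $[S,T]\leq_{\mathrm{ti}}[S',T']$ iff $S\leq_{\mathrm t}S'$ and $T\leq_{\mathrm t}T'$. A Tamari diagram of size $n$ is a word $u=u_1\cdots u_n$ of integers with $0\leq u_i\leq n-i$ and $u_{i+j}\leq u_i-j$ for all $i\in[n]$, $0\leq j\leq u_i$. A dual Tamari diagram of size $n$ is a word $v$ of integers with $0\leq v_i\leq i-1$ and $v_{i-j}\leq v_i-j$ for all $i\in[n]$, $0\leq j\leq v_i$. $(u,v)$ is a Tamari interval diagram if moreover for all $1\leq i<j\leq n$ with $j-i\leq u_i$ one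 has $v_j<j-i$. A cubic coordinate of size $n$ is $c\in\mathbb{Z}^{n-1}$ such that $(u,v)$ with $u_i=\max(c_i,0)$ ($i\in[n-1]$), $u_n=0$, $v_1=0$, $v_i=|\min(c_{i-1},0)|$ ($2\leq i\leq n$) is a Tamari interval diagram; $\mathcal{CC}_n$ is their set, ordered componentwise: $c\leq_{\mathrm{cc}}c'$ iff $c_i\leq c'_i$ for all $i$. (The map $\psi$ is the composite of the Châtel–Pons bijection from Tamari intervals to interval-posets with the bijections from interval-posets to Tamari interval diagrams to cubic coordinates.) *)

From mathcomp Require Import all_boot all_order all_algebra.
Set Implicit Arguments. Unset Strict Implicit. Unset Printing Implicit Defensive.
Import Order.TTheory GRing.Theory Num.Theory.

(* Binary trees; nodes are labeled 1..n in in-order. *)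
Inductive bt : Type := Leaf | Node of bt & bt.

Fixpoint bt_size (t : bt) : nat :=
  match t with Leaf => 0 | Node l r => (bt_size l + bt_size r).+1 end.

Inductive rrot : bt -> bt -> Prop :=
| rrot_root A B C : rrot (Node (Node A B) C) (Node A (Node B C))
| rrot_l l l' r : rrot l l' -> rrot (Node l r) (Node l' r)
| rrot_r l r r' : rrot r r' -> rrot (Node l r) (Node l r').

Inductive tamari_le : bt -> bt -> Prop :=
| tamari_refl S : tamari_le S S
| tamari_step S S' T : rrot S S' -> tamari_le S' T -> tamari_le S T.

Definition tamari_interval (n : nat) (S T : bt) : Prop :=
  bt_size S = n /\ bt_size T = n /\ tamari_le S T.

Definition ti_le (S T S' T' : bt) : Prop := tamari_le S S' /\ tamari_le T T'.

(* In-order list of sizes of right (resp. left) subtrees: the k-th entry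
   (0-indexed) corresponds to node k+1. *)
Fixpoint rsizes (t : bt) : seq nat :=
  match t with Leaf => [::] | Node l r => rsizes l ++ bt_size r :: rsizes r end.
Fixpoint lsizes (t : bt) : seq nat :=
  match t with Leaf => [::] | Node l r => lsizes l ++ bt_size l :: lsizes r end.

Definition r_sub (S : bt) (i : nat) : nat := nth 0 (rsizes S) i.-1.
Definition l_sub (T : bt) (j : nat) : nat := nth 0 (lsizes T) j.-1.

(* Words are indexed 1..n via functions nat -> nat. *)
Definition tamari_diagram (n : nat) (u : nat -> nat) : Prop :=
  forall i, 1 <= i <= n ->
    u i <= n - i /\ (forall j, j <= u i -> u (i + j) <= u i - j).

Definition dual_tamari_diagram (n : nat) (v : nat -> nat) : Prop :=
  forall i, 1 <= i <= n ->
    v i <= i - 1 /\ (forall j, j <= v i -> v (i - j) <= v i - j).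

Definition tamari_interval_diagram (n : nat) (u v : nat -> nat) : Prop :=
  [/\ tamari_diagram n u, dual_tamari_diagram n v &
      forall i j, 1 <= i -> i < j -> j <= n -> j - i <= u i -> v j < j - i].

Definition cc_at (c : seq int) (i : nat) : int := nth 0%R c i.-1.

Definition cc_u (n : nat) (c : seq int) (i : nat) : nat :=
  if (1 <= i) && (i <= n.-1) then `|Num.max (cc_at c i) 0%R|%N else 0.
Definition cc_v (n : nat) (c : seq int) (i : nat) : nat :=
  if (2 <= i) && (i <= n) then `|Num.min (cc_at c i.-1) 0%R|%N else 0.

Definition cubic_coord (n : nat) (c : seq int) : Prop :=
  size c = n.-1 /\ tamari_interval_diagram n (cc_u n c) (cc_v n c).

Definition cc_le (n : nat) (c c' : seq int) : Prop :=
  forall i, 1 <= i <= n.-1 -> (cc_at c i <= cc_at c' i)%R.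

Definition psi (n : nat) (S T : bt) : seq int :=
  mkseq (fun k => ((r_sub S k.+1)%:Z - (l_sub T k.+2)%:Z)%R) n.-1.

From mathcomp Require Import all_boot all_algebra zify.

(** A binary tree is determined by the sequence [r_S] of the sizes of its right
    subtrees, and [S <= T] in the Tamari order iff [r_S <= r_T] componentwise:
    a rotation only enlarges one entry, and conversely a tree dominated by [T]
    can be rotated to have the same root as [T], and one recurses into the
    two subtrees.  Mirroring gives
    the same for left subtree sizes [l_T], with the order reversed.  The
    sequences of the form [r_S] (resp. [l_T]) are exactly the Tamari diagrams
    (resp. dual ones), and [S <= T] iff [(r_S, l_T)] satisfies the
    compatibility condition of Tamari interval diagrams, because node [j] lies
    in the right subtree of node [i] of [T] iff no node between them has a
    left subtree reaching back to [i].  In an interval [r_S(i)] and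
    [l_T(i+1)] are never both positive, so [c_i = r_S(i) - l_T(i+1)] records
    both through its positive and negative parts, and comparing the [c_i]
    amounts to comparing [r_S] and [l_T] separately. *)

Set Implicit Arguments. Unset Strict Implicit.

(* 0-indexed: [rs t i] is r_t(i+1) and [ls t i] is l_t(i+1). *)
Notation rs t i := (nth 0 (rsizes t) i).
Notation ls t i := (nth 0 (lsizes t) i).

Lemma size_rsizes t : size (rsizes t) = bt_size t.
Proof. by elim: t => //= l IHl r IHr; rewrite size_cat /= IHl IHr addnS. Qed.

Lemma size_lsizes t : size (lsizes t) = bt_size t.
Proof. by elim: t => //= l IHl r IHr; rewrite size_cat /= IHl IHr addnS. Qed.

Lemma nth_cat_mid (s1 s2 : seq nat) x i :
  nth 0 (s1 ++ x :: s2) i =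
  if i < size s1 then nth 0 s1 i else if i == size s1 then x
  else nth 0 s2 (i - (size s1).+1).
Proof.
rewrite nth_cat; case: ltnP => // hi; case: eqVneq => [->|ne]; first by rewrite subnn.
by have -> : i - size s1 = (i - (size s1).+1).+1 by lia.
Qed.

Lemma rs_Node l r i :
  rs (Node l r) i = if i < bt_size l then rs l i else if i == bt_size l then bt_size r
                    else rs r (i - (bt_size l).+1).
Proof. by rewrite /= nth_cat_mid size_rsizes. Qed.

Lemma ls_Node l r i :
  ls (Node l r) i = if i < bt_size l then ls l i else if i == bt_size l then bt_size l
                    else ls r (i - (bt_size l).+1).
Proof. by rewrite /= nth_cat_mid size_lsizes. Qed.

Lemma rs_bound t i : i < bt_size t -> rs t i + i < bt_size t.
Proof.
elim: t i => //= l IHl r IHr i hi; rewrite rs_Node.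
case: (ltnP i (bt_size l)) => h1; first by have := IHl i h1; lia.
case: eqVneq => h2; first lia.
have := IHr (i - (bt_size l).+1); lia.
Qed.

Lemma rs_last t i : bt_size t <= i.+1 -> rs t i = 0.
Proof.
move=> h; case: (ltnP i (bt_size t)) => hi; first by have := rs_bound hi; lia.
by rewrite nth_default // size_rsizes.
Qed.

Lemma ls_le t i : ls t i <= i.
Proof.
elim: t i => [i|l IHl r IHr i]; first by rewrite nth_nil.
rewrite ls_Node; case: (ltnP i (bt_size l)) => h1; first exact: IHl.
case: eqVneq => h2; first lia.
have := IHr (i - (bt_size l).+1); lia.
Qed.

Lemma ls0 t : ls t 0 = 0.
Proof. by apply/eqP; rewrite -leqn0 ls_le. Qed.

Definition pointwise_le (s t : seq nat) :=
  size s = size t /\ forall i, nth 0 s i <= nth 0 t i.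

Lemma pointwise_le_refl s : pointwise_le s s.
Proof. by []. Qed.

Lemma pointwise_le_trans s t u :
  pointwise_le s t -> pointwise_le t u -> pointwise_le s u.
Proof.
by move=> [e1 h1] [e2 h2]; split=> [|i]; [rewrite e1 | apply: leq_trans (h1 i) (h2 i)].
Qed.

Lemma pointwise_le_cat s s' t t' :
  pointwise_le s s' -> pointwise_le t t' -> pointwise_le (s ++ t) (s' ++ t').
Proof.
move=> [hs h1] [ht h2]; split; first by rewrite !size_cat hs ht.
by move=> i; rewrite !nth_cat hs; case: ifP.
Qed.

Lemma pointwise_le_cons x y s t :
  x <= y -> pointwise_le s t -> pointwise_le (x :: s) (y :: t).
Proof. by move=> hx [hs h]; split=> [|[]] /=; rewrite ?hs. Qed.

Lemma pointwise_le_take k s t : pointwise_le s t -> pointwise_le (take k s) (take k t).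
Proof.
move=> [hs h]; split; first by rewrite !size_take hs.
move=> i; case: (ltnP i k) => hi; first by rewrite !nth_take.
by rewrite !nth_default // size_take; case: ltnP => //; lia.
Qed.

Lemma pointwise_le_drop k s t : pointwise_le s t -> pointwise_le (drop k s) (drop k t).
Proof. by move=> [hs h]; split=> [|i]; rewrite ?size_drop ?hs // !nth_drop. Qed.

Lemma pointwise_le_rev s t : pointwise_le s t -> pointwise_le (rev s) (rev t).
Proof.
move=> [hs h]; split; first by rewrite !size_rev hs.
move=> i; case: (ltnP i (size s)) => hi; first by rewrite !nth_rev -?hs.
by rewrite !nth_default ?size_rev -?hs.
Qed.

Lemma pointwise_le_anti s t : pointwise_le s t -> pointwise_le t s -> s = t.
Proof.
move=> [hs h1] [_ h2]; apply: (eq_from_nth (x0 := 0) hs) => i _.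
by apply/eqP; rewrite eqn_leq h1 h2.
Qed.

(** * The Tamari order through right subtree sizes *)

Lemma tamari_trans S T U : tamari_le S T -> tamari_le T U -> tamari_le S U.
Proof. by elim=> // {}S S' {}T h _ IH /IH; apply: tamari_step. Qed.

Lemma tamari_rrot S T : rrot S T -> tamari_le S T.
Proof. by move/tamari_step; apply; apply: tamari_refl. Qed.

Lemma tamari_le_homo (f : bt -> bt) :
  (forall S T, rrot S T -> rrot (f S) (f T)) ->
  forall S T, tamari_le S T -> tamari_le (f S) (f T).
Proof.
move=> hf S T; elim=> [U|U U' V /hf h _ IH]; first exact: tamari_refl.
exact: tamari_step h IH.
Qed.

Lemma tamari_le_Node l l' r r' :
  tamari_le l l' -> tamari_le r r' -> tamari_le (Node l r) (Node l' r').
Proof.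
move=> /(@tamari_le_homo (Node^~ r) (fun _ _ h => rrot_l r h)) hl.
move=> /(@tamari_le_homo (Node l') (fun _ _ h => rrot_r l' h)).
exact: tamari_trans hl.
Qed.

Lemma rrot_size S T : rrot S T -> bt_size S = bt_size T.
Proof. by elim=> //= *; lia. Qed.

Lemma tamari_le_size S T : tamari_le S T -> bt_size S = bt_size T.
Proof. by elim=> // {}S S' {}T /rrot_size ->. Qed.

Lemma rrot_rsizes S T : rrot S T -> pointwise_le (rsizes S) (rsizes T).
Proof.
elim=> /= [A B C|l l' r _ IH|l r r' h IH].
- rewrite -catA; apply: pointwise_le_cat (pointwise_le_refl _) _.
  by apply: pointwise_le_cons (pointwise_le_refl _); rewrite /=; lia.
- exact: pointwise_le_cat IH (pointwise_le_refl _).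
- apply: pointwise_le_cat (pointwise_le_refl _) _.
  by rewrite (rrot_size h); apply: pointwise_le_cons.
Qed.

Lemma tamari_le_rsizes S T : tamari_le S T -> pointwise_le (rsizes S) (rsizes T).
Proof.
elim=> [U|U U' V /rrot_rsizes h _]; first exact: pointwise_le_refl.
exact: pointwise_le_trans.
Qed.

(* If the right subtrees of the first [k] nodes stay among these nodes,
   rotations can bring node [k+1] to the root. *)
Lemma tamari_le_split S k :
  k < bt_size S -> (forall i, i < k -> rs S i + i < k) ->
  exists A B, [/\ bt_size A = k, tamari_le S (Node A B),
                  rsizes A = take k (rsizes S) & rsizes B = drop k.+1 (rsizes S)].
Proof.
elim: S k => //= l IHl r _ k hk hi.
case: (ltngtP k (bt_size l)) => hkl.
- have hi' i : i < k -> rs l i + i < k.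
    by move=> ik; have := hi i ik; rewrite rs_Node ifT //; lia.
  have [A [B [hA hlAB eA eB]]] := IHl k hkl hi'.
  exists A, (Node B r); split=> //.
  + apply: tamari_trans (tamari_le_Node hlAB (tamari_refl r)) _.
    exact/tamari_rrot/rrot_root.
  + by rewrite eA take_cat size_rsizes hkl.
  + rewrite /= eB drop_cat size_rsizes; case: ltnP => // hk1.
    by rewrite drop_oversize ?size_rsizes // (_ : k.+1 - _ = 0) //; lia.
- by have := hi _ hkl; rewrite rs_Node ltnn eqxx; lia.
- exists l, r; split=> //; first exact: tamari_refl.
  + by rewrite hkl take_cat size_rsizes ltnn subnn take0 cats0.
  + by rewrite hkl drop_cat size_rsizes ltnNge leqnSn /= subSnn /= drop0.
Qed.

Lemma rsizes_take_drop l r :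
  rsizes l = take (bt_size l) (rsizes (Node l r)) /\
  rsizes r = drop (bt_size l).+1 (rsizes (Node l r)).
Proof.
rewrite /= take_cat drop_cat size_rsizes ltnn ltnNge leqnSn /=.
by rewrite subnn take0 cats0 subSnn /= drop0.
Qed.

Lemma rsizes_le_tamari S T : pointwise_le (rsizes S) (rsizes T) -> tamari_le S T.
Proof.
elim: T S => [|TL IHL TR IHR] S hST; have [hs hle] := hST; rewrite !size_rsizes in hs.
  by case: S hs {hST hle} => // _; apply: tamari_refl.
have hk : bt_size TL < bt_size S by rewrite hs /=; lia.
have hi i : i < bt_size TL -> rs S i + i < bt_size TL.
  by move=> ik; have := hle i; rewrite rs_Node ik; have := rs_bound ik; lia.
have [A [B [_ hSAB eA eB]]] := tamari_le_split hk hi.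
have [eL eR] := rsizes_take_drop TL TR.
apply: tamari_trans hSAB (tamari_le_Node _ _).
- by apply: IHL; rewrite eA eL; apply: pointwise_le_take.
- by apply: IHR; rewrite eB eR; apply: pointwise_le_drop.
Qed.

Lemma tamari_leE S T : tamari_le S T <-> pointwise_le (rsizes S) (rsizes T).
Proof. by split; [apply: tamari_le_rsizes | apply: rsizes_le_tamari]. Qed.

Lemma rsizes_inj : injective rsizes.
Proof.
elim=> [|l IHl r IHr] [|l' r'] //=; try by move/(f_equal size); rewrite size_cat /= addnS.
move=> e; have hsz : bt_size (Node l r) = bt_size (Node l' r').
  by rewrite -!size_rsizes /= e.
have hl : bt_size l = bt_size l'.
  case: (ltngtP (bt_size l) (bt_size l')) => // h.
  - have := f_equal (nth 0 ^~ (bt_size l)) e; rewrite -!/(rs (Node _ _) _) !rs_Node.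
    by rewrite ltnn eqxx h; have := rs_bound h; move: hsz => /=; lia.
  - have := f_equal (nth 0 ^~ (bt_size l')) e; rewrite -!/(rs (Node _ _) _) !rs_Node.
    by rewrite ltnn eqxx h; have := rs_bound h; move: hsz => /=; lia.
move/eqP: e; rewrite eqseq_cat ?size_rsizes // => /andP [/eqP e1 /eqP [_ e3]].
by rewrite (IHl _ e1) (IHr _ e3).
Qed.

Lemma tamari_anti S T : tamari_le S T -> tamari_le T S -> S = T.
Proof. by move=> /tamari_leE hST /tamari_leE hTS; apply/rsizes_inj/pointwise_le_anti. Qed.

(** * Tamari diagrams *)

(* 0-indexed Tamari diagrams: entry [i] of [s] is [u_(i+1)]. *)
Definition tamari_seq (s : seq nat) := forall i, i < size s ->
  nth 0 s i + i < size s /\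
  forall j, j <= nth 0 s i -> nth 0 s (i + j) + j <= nth 0 s i.

Lemma tamari_seq_rsizes t : tamari_seq (rsizes t).
Proof.
elim: t => [|l IHl r IHr] i; rewrite size_rsizes // => /= hi.
split=> [|j]; first exact: (@rs_bound (Node l r)).
rewrite !rs_Node; case: (ltnP i (bt_size l)) => h1.
  move=> hj; have hb := rs_bound h1; rewrite ifT; last lia.
  by have [_ ->] := IHl i ltac:(by rewrite size_rsizes).
case: eqVneq => [->|h2] hj.
  case: (posnP j) => [->|hj0]; first by rewrite !addn0 ltnn eqxx.
  rewrite ifF; last lia; rewrite ifF; last lia.
  have := @rs_bound r (bt_size l + j - (bt_size l).+1); lia.
rewrite ifF; last lia; rewrite ifF; last lia.
have [_ /(_ j hj)] := IHr (i - (bt_size l).+1) ltac:(by rewrite size_rsizes /=; lia).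
by rewrite (_ : i + j - _ = i - (bt_size l).+1 + j) //; lia.
Qed.

Lemma tamari_seq_drop k s : tamari_seq s -> tamari_seq (drop k s).
Proof.
move=> hs i; rewrite size_drop => hi; rewrite !nth_drop.
have [hb hj] := hs (k + i) ltac:(lia).
by split=> [|j]; [lia | rewrite !nth_drop addnA; apply: hj].
Qed.

Lemma tamari_seq_take k s : k <= size s ->
  (forall i, i < k -> nth 0 s i + i < k) -> tamari_seq s -> tamari_seq (take k s).
Proof.
move=> hk hclosed hs i; rewrite size_take_min (minn_idPl hk) => ik.
have hb := hclosed i ik; rewrite !nth_take //; split=> // j hj.
have [_ /(_ j hj)] := hs i ltac:(lia); rewrite nth_take //; lia.
Qed.

(* The root is the first node whose right subtree reaches the last node. *)
Lemma tamari_seq_rsizes_surj s : tamari_seq s -> exists t, rsizes t = s.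
Proof.
elim: {s}(size s) {-2}s (leqnn (size s)) => [|N IH] s hN hs.
  by exists Leaf; case: s hN {hs}.
case: (posnP (size s)) => hs0; first by exists Leaf; case: s hs0 {hN hs}.
have exP : exists i, (nth 0 s i + i).+1 == size s.
  by exists (size s).-1; have [h _] := hs (size s).-1 ltac:(lia); apply/eqP; lia.
case: (ex_minnP exP) => k /eqP hk hmin.
have hclosed i : i < k -> nth 0 s i + i < k.
  move=> ik; have [hb hj] := hs i ltac:(lia).
  rewrite ltnNge; apply/negP => hc.
  have := hj (k - i) ltac:(lia); rewrite subnKC ?(ltnW ik) // => hle.
  by have := hmin i; rewrite (_ : _.+1 == _) //; [lia | apply/eqP; lia].
have [A eA] := IH (take k s) ltac:(by rewrite size_take; case: ltnP; lia)
                  (@tamari_seq_take k s ltac:(lia) hclosed hs).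
have [B eB] := IH (drop k.+1 s) ltac:(by rewrite size_drop; lia) (@tamari_seq_drop k.+1 s hs).
exists (Node A B); rewrite /= eA eB (_ : bt_size B = nth 0 s k).
  by rewrite -drop_nth ?cat_take_drop //; lia.
by rewrite -size_rsizes eB size_drop; lia.
Qed.

(** * Mirror symmetry *)

Fixpoint mirror (t : bt) : bt :=
  match t with Leaf => Leaf | Node l r => Node (mirror r) (mirror l) end.

Lemma mirrorK : involutive mirror.
Proof. by elim=> //= l -> r ->. Qed.

Lemma size_mirror t : bt_size (mirror t) = bt_size t.
Proof. by elim: t => //= l -> r ->; rewrite addnC. Qed.

Lemma lsizes_mirror t : lsizes t = rev (rsizes (mirror t)).
Proof. by elim: t => //= l -> r ->; rewrite rev_cat rev_cons cat_rcons size_mirror. Qed.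

Lemma rrot_mirror S T : rrot S T -> rrot (mirror T) (mirror S).
Proof.
elim=> /= [A B C|l l' r _ IH|l r r' _ IH]; first exact: rrot_root.
- exact: rrot_r.
- exact: rrot_l.
Qed.

Lemma tamari_le_mirror S T : tamari_le S T -> tamari_le (mirror T) (mirror S).
Proof.
elim=> [U|U U' V /rrot_mirror h _ IH]; first exact: tamari_refl.
exact: tamari_trans IH (tamari_rrot h).
Qed.

Lemma tamari_leE_lsizes T T' : tamari_le T T' <-> pointwise_le (lsizes T') (lsizes T).
Proof.
rewrite !lsizes_mirror; split=> [/tamari_le_mirror/tamari_leE|]; first exact: pointwise_le_rev.
move/pointwise_le_rev; rewrite !revK => /tamari_leE/tamari_le_mirror.
by rewrite !mirrorK.
Qed.

(* 0-indexed dual Tamari diagrams: entry [i] of [s] is [v_(i+1)]. *)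
Definition dual_tamari_seq (s : seq nat) := forall i, i < size s ->
  nth 0 s i <= i /\
  forall j, j <= nth 0 s i -> nth 0 s (i - j) + j <= nth 0 s i.

Lemma dual_tamari_seq_rev s : dual_tamari_seq (rev s) <-> tamari_seq s.
Proof.
split=> hs i; rewrite ?size_rev => hi;
  have [hi' e] : size s - i.+1 < size s /\ size s - (size s - i.+1).+1 = i by split; lia.
- have [h1 h2] := hs (size s - i.+1) ltac:(by rewrite size_rev); rewrite nth_rev // e in h1 h2.
  split=> [|j hj]; first lia.
  have := h2 j hj; rewrite nth_rev; last lia.
  by rewrite (_ : size s - (size s - i.+1 - j).+1 = i + j) //; lia.
- have [h1 h2] := hs _ hi'; rewrite nth_rev //.
  split=> [|j hj]; first lia.
  have := h2 j hj; rewrite nth_rev; last lia.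
  by rewrite (_ : size s - (i - j).+1 = size s - i.+1 + j) //; lia.
Qed.

Lemma dual_tamari_seq_lsizes t : dual_tamari_seq (lsizes t).
Proof. by rewrite lsizes_mirror dual_tamari_seq_rev; apply: tamari_seq_rsizes. Qed.

Lemma dual_tamari_seq_lsizes_surj s : dual_tamari_seq s -> exists t, lsizes t = s.
Proof.
rewrite -[s]revK dual_tamari_seq_rev => /tamari_seq_rsizes_surj [t et].
by exists (mirror t); rewrite lsizes_mirror mirrorK et.
Qed.

(* Node [j] lies in the right subtree of node [i] iff no node after [i] up to
   [j] has a left subtree reaching back to [i]. *)
Lemma rs_reachE t i j : i < j -> j < bt_size t ->
  (j - i <= rs t i <-> forall m, i < m <= j -> ls t m < m - i).
Proof.
elim: t i j => //= l IHl r IHr i j hij hj; rewrite rs_Node.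
have ls_right m : bt_size l < m -> ls (Node l r) m = ls r (m - (bt_size l).+1).
  by move=> hm; rewrite ls_Node ltnNge ltnW //= gtn_eqF.
case: (ltnP j (bt_size l)) => hjl.
  rewrite ifT; last lia; rewrite (IHl i j hij hjl).
  by split=> H m /andP[h1 h2]; have := H m; rewrite ls_Node ifT ?h1 ?h2 //; lia.
case: (ltnP i (bt_size l)) => hil.
  split=> [|/(_ (bt_size l))]; first by have := rs_bound hil; lia.
  by rewrite ls_Node ltnn eqxx hil hjl; lia.
case: eqVneq => [->|hil'].
  split=> [_ m /andP[h1 h2]|_]; last lia; rewrite ls_right //.
  by have := ls_le r (m - (bt_size l).+1); lia.
have := IHr (i - (bt_size l).+1) (j - (bt_size l).+1) ltac:(lia) ltac:(lia).
rewrite (_ : j - _ - _ = j - i); last lia; move=> ->; split=> H m /andP[h1 h2].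
  by rewrite ls_right; last lia; have := H (m - (bt_size l).+1); lia.
have := H (m + (bt_size l).+1); rewrite ls_right ?addnK; lia.
Qed.

Lemma tamari_le_compatible S T : bt_size S = bt_size T ->
  tamari_le S T <->
  forall i j, i < j < bt_size T -> j - i <= rs S i -> ls T j < j - i.
Proof.
move=> hsz; rewrite tamari_leE; split=> [[_ hle] i j /andP[hij hj] hS|H].
  have /(rs_reachE hij hj) := leq_trans hS (hle i).
  by apply; rewrite hij leqnn.
split=> [|i]; first by rewrite !size_rsizes.
case: (ltnP i (bt_size S)) => hi; last by rewrite nth_default // size_rsizes.
case: (posnP (rs S i)) => [->|hpos] //.
have hb := rs_bound hi.
have hij : i < i + rs S i by lia.
have hj : i + rs S i < bt_size T by lia.
have := (rs_reachE hij hj).2; rewrite addKn; apply=> m /andP[h1 h2]; apply: H; lia.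
Qed.

Lemma tamari_le_disjoint S T k : tamari_le S T -> k.+1 < bt_size T ->
  rs S k = 0 \/ ls T k.+1 = 0.
Proof.
move=> hST hk; case: (posnP (rs S k)) => [|hpos]; [by left | right].
have /tamari_le_compatible H := hST; rewrite (tamari_le_size hST) in H.
by have := H erefl k k.+1; rewrite ltnSn hk subSnn => /(_ isT hpos); lia.
Qed.

(** * Cubic coordinates *)

Lemma tamari_diagram_mkseq n u :
  tamari_diagram n u <-> tamari_seq (mkseq (fun k => u k.+1) n).
Proof.
split=> hu i.
- rewrite size_mkseq => hi; rewrite nth_mkseq //.
  have [h1 h2] := hu i.+1 ltac:(lia); split=> [|j hj]; first lia.
  by have := h2 j hj; rewrite nth_mkseq -?addSn; lia.
- case: i => [|i] // /andP[_ hi].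
  have [|hb hj] := hu i; first by rewrite size_mkseq.
  rewrite size_mkseq nth_mkseq // in hb hj; split=> [|j hji]; first lia.
  by have := hj j hji; rewrite nth_mkseq -?addSn; lia.
Qed.

Lemma dual_tamari_diagram_mkseq n v :
  dual_tamari_diagram n v <-> dual_tamari_seq (mkseq (fun k => v k.+1) n).
Proof.
split=> hv i.
- rewrite size_mkseq => hi; rewrite nth_mkseq //.
  have [h1 h2] := hv i.+1 ltac:(lia); split=> [|j hj]; first lia.
  by have := h2 j hj; rewrite nth_mkseq -?subSn; lia.
- case: i => [|i] // /andP[_ hi].
  have [|hb hj] := hv i; first by rewrite size_mkseq.
  rewrite nth_mkseq // in hb hj; split=> [|j hji]; first lia.
  by have := hj j hji; rewrite nth_mkseq -?subSn; lia.
Qed.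

Lemma nth_psi n S T k : k < n.-1 ->
  nth 0%R (psi n S T) k = ((rs S k)%:Z - (ls T k.+1)%:Z)%R.
Proof. exact: nth_mkseq. Qed.

Section PsiOfInterval.

Variables (n : nat) (S T : bt).
Hypothesis hST : tamari_interval n S T.

Lemma interval_disjoint k : k < n.-1 -> rs S k = 0 \/ ls T k.+1 = 0.
Proof. by case: hST => _ [hT hle] hk; apply: tamari_le_disjoint hle _; lia. Qed.

Lemma cc_u_psi i : 1 <= i <= n -> cc_u n (psi n S T) i = rs S i.-1.
Proof.
case: i => [|i] // /andP[_ hi]; rewrite /cc_u /=; case: leqP => hin.
  by case: hST => hS _; rewrite rs_last //; lia.
by rewrite /cc_at /= nth_psi //; have := interval_disjoint hin; lia.
Qed.

Lemma cc_v_psi i : 1 <= i <= n -> cc_v n (psi n S T) i = ls T i.-1.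
Proof.
case: i => [|[|i]] // /andP[_ hi]; first by rewrite /cc_v ls0.
rewrite /cc_v hi /cc_at /= nth_psi; last lia.
by have := @interval_disjoint i; lia.
Qed.

Lemma mkseq_cc_u_psi : mkseq (fun k => cc_u n (psi n S T) k.+1) n = rsizes S.
Proof.
case: hST => hS _; apply: (eq_from_nth (x0 := 0)); first by rewrite size_mkseq size_rsizes.
by move=> k; rewrite size_mkseq => hk; rewrite nth_mkseq // cc_u_psi //; lia.
Qed.

Lemma mkseq_cc_v_psi : mkseq (fun k => cc_v n (psi n S T) k.+1) n = lsizes T.
Proof.
case: hST => _ [hT _]; apply: (eq_from_nth (x0 := 0)); first by rewrite size_mkseq size_lsizes.
by move=> k; rewrite size_mkseq => hk; rewrite nth_mkseq // cc_v_psi //; lia.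
Qed.

Lemma psi_cubic_coord : cubic_coord n (psi n S T).
Proof.
have [hS [hT hle]] := hST; split; first by rewrite size_mkseq.
split.
- by apply/tamari_diagram_mkseq; rewrite mkseq_cc_u_psi; apply: tamari_seq_rsizes.
- by apply/dual_tamari_diagram_mkseq; rewrite mkseq_cc_v_psi; apply: dual_tamari_seq_lsizes.
- move=> i j h1 h2 h3; rewrite cc_u_psi ?cc_v_psi; try lia.
  have /(tamari_le_compatible _).1 := hle; rewrite hS hT => /(_ erefl i.-1 j.-1).
  by rewrite (_ : j.-1 - i.-1 = j - i); lia.
Qed.

End PsiOfInterval.

Lemma psi_surj n c : cubic_coord n c -> exists S T, tamari_interval n S T /\ psi n S T = c.
Proof.
move=> [hc [/tamari_diagram_mkseq hu /dual_tamari_diagram_mkseq hv hcompat]].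
have [S eS] := tamari_seq_rsizes_surj hu.
have [T eT] := dual_tamari_seq_lsizes_surj hv.
have hS : bt_size S = n by rewrite -size_rsizes eS size_mkseq.
have hT : bt_size T = n by rewrite -size_lsizes eT size_mkseq.
have hST : tamari_le S T.
  apply/tamari_le_compatible; first by rewrite hS hT.
  move=> i j /andP[hij hj]; rewrite eS eT hT in hj *; rewrite !nth_mkseq; try lia.
  by move=> h; apply: (hcompat i.+1 j.+1); lia.
exists S, T; split=> //; apply: (eq_from_nth (x0 := 0%R)); first by rewrite size_mkseq hc.
move=> k; rewrite size_mkseq => hk; rewrite nth_psi // eS eT !nth_mkseq; try lia.
by rewrite /cc_u /cc_v /cc_at !ifT /=; lia.
Qed.

Lemma pointwise_le_rsizes n S S' : bt_size S = n -> bt_size S' = n ->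
  pointwise_le (rsizes S) (rsizes S') <-> forall k, k < n.-1 -> rs S k <= rs S' k.
Proof.
move=> hS hS'; split=> [[_ h] k _ | h]; first exact: h.
split=> [|k]; first by rewrite !size_rsizes hS hS'.
by case: (ltnP k n.-1) => [/h|hk] //; rewrite rs_last // hS; lia.
Qed.

Lemma pointwise_le_lsizes n T T' : bt_size T = n -> bt_size T' = n ->
  pointwise_le (lsizes T) (lsizes T') <-> forall k, k < n.-1 -> ls T k.+1 <= ls T' k.+1.
Proof.
move=> hT hT'; split=> [[_ h] k _ | h]; first exact: h.
split=> [|[|k]]; [by rewrite !size_lsizes hT hT' | by rewrite ls0 |].
by case: (ltnP k n.-1) => [/h|hk] //; rewrite nth_default // size_lsizes hT; lia.
Qed.

Lemma psi_le n S T S' T' : tamari_interval n S T -> tamari_interval n S' T' ->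
  ti_le S T S' T' <-> cc_le n (psi n S T) (psi n S' T').
Proof.
move=> hI hI'; have [hS [hT _]] := hI; have [hS' [hT' _]] := hI'.
rewrite /ti_le tamari_leE tamari_leE_lsizes.
rewrite (pointwise_le_rsizes hS hS') (pointwise_le_lsizes hT' hT).
have cc_at_psiE k : k < n.-1 ->
    (cc_at (psi n S T) k.+1 <= cc_at (psi n S' T') k.+1)%R <->
    rs S k <= rs S' k /\ ls T' k.+1 <= ls T k.+1.
  move=> hk; rewrite /cc_at /= !nth_psi //.
  by have := interval_disjoint hI hk; have := interval_disjoint hI' hk; lia.
split=> [[hr hl] [|i] // /andP[_ hi] | h].
  by apply/cc_at_psiE => //; split; [apply: hr | apply: hl].
by split=> k hk; have /(cc_at_psiE k hk) [] := h k.+1 hk.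
Qed.

Lemma cc_le_refl n c : cc_le n c c.
Proof. by move=> i _; lia. Qed.

Lemma psi_inj n S T S' T' : tamari_interval n S T -> tamari_interval n S' T' ->
  psi n S T = psi n S' T' -> S = S' /\ T = T'.
Proof.
move=> hI hI' e.
have [hSS' hTT'] : ti_le S T S' T' by apply/(psi_le hI hI'); rewrite e; apply: cc_le_refl.
have [hS'S hT'T] : ti_le S' T' S T by apply/(psi_le hI' hI); rewrite e; apply: cc_le_refl.
by split; apply: tamari_anti.
Qed.

Theorem theorem3p2 (n : nat) (hn : 1 <= n) :
  (* psi takes values in CC_n *)
  (forall S T, tamari_interval n S T -> cubic_coord n (psi n S T)) /\
  (* psi is injective on TI_n *)
  (forall S T S' T', tamari_interval n S T -> tamari_interval n S' T' ->
     psi n S T = psi n S' T' -> S = S' /\ T = T') /\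
  (* psi is surjective onto CC_n *)
  (forall c, cubic_coord n c ->
     exists S T, tamari_interval n S T /\ psi n S T = c) /\
  (* psi preserves and reflects the order *)
  (forall S T S' T', tamari_interval n S T -> tamari_interval n S' T' ->
     (ti_le S T S' T' <-> cc_le n (psi n S T) (psi n S' T'))).
Proof.
split; first exact: psi_cubic_coord.
split; first exact: psi_inj.
split; first exact: psi_surj.
exact: psi_le.
Qed.
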